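(* Let $M$ be an $n$-dimensional path-connected manifold, let $\psi_t$ be a complete flow on $M$, and let $\Sigma\subset M$ be a global Poincar\'e section of $\psi$ that is relatively closed in $M$. Let $T:\Sigma\to\mathbb{R}^+$ be the first return time, $r_\psi(\sigma)=\psi_{T(\sigma)}(\sigma)$ the first return map, $p:\Sigma\times\mathbb{R}\to M$, $p(\sigma,\tau)=\psi_\tau(\sigma)$, and $\Delta:\Sigma\times\mathbb{R}\to\Sigma\times\mathbb{R}$, $\Delta(\sigma,\tau)=(r_\psi(\sigma),\tau-T(\sigma))$. Then for each $x\in M$ and each $(\sigma_0,\tau_0)\in\Sigma\times\mathbb{R}$ with $p(\sigma_0,\tau_0)=x$, \[ p^{-1}(x)=\{\Delta^n(\sigma_0,\tau_0): n\in\mathbb{Z}\}. \]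
   Context: A relatively closed, codimension-one submanifold $\Sigma\hookrightarrow M$ is a Poincar\'e section of a flow $\psi$ if it is transverse to the flow; it is a global Poincar\'e section of a complete flow if every orbit of the flow has both forward and backward transversal intersections with $\Sigma$. ''Relatively closed'' means: any sequence in $\Sigma$ converging in $M$ converges in $\Sigma$. The first return time $T(\sigma)$ is the smallest positive number with $\psi_{T(\sigma)}(\sigma)\in\Sigma$. *)

From HB Require Import structures.
From mathcomp Require Import all_boot all_order all_algebra.
From mathcomp Require Import all_classical all_reals all_analysis.
Set Implicit Arguments. Unset Strict Implicit. Unset Printing Implicit Defensive.
Import Order.TTheory GRing.Theory Num.Theory.
Import numFieldNormedType.Exports.
Local Open Scope classical_set_scope.
Local Open Scope ring_scope.

Record chart (R : realType) (M : topologicalType) (n : nat) := Chart {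
  ch_dom : set M;
  ch_map : M -> 'rV[R]_n;
  ch_inv : 'rV[R]_n -> M;
  ch_open : open ch_dom;
  ch_img_open : open (ch_map @` ch_dom);
  ch_cont : {within ch_dom, continuous ch_map};
  ch_inv_cont : {within ch_map @` ch_dom, continuous ch_inv};
  ch_left : forall x, ch_dom x -> ch_inv (ch_map x) = x;
  ch_right : forall v, (ch_map @` ch_dom) v -> ch_map (ch_inv v) = v }.

Definition diff_atlas (R : realType) (M : topologicalType) (n : nat)
  (A : set (chart R M n)) : Prop :=
  (forall x : M, exists c, A c /\ ch_dom c x) /\
  (forall c1 c2, A c1 -> A c2 -> forall v,
     (ch_map c1 @` (ch_dom c1 `&` ch_dom c2)) v ->
     differentiable (ch_map c2 \o ch_inv c1) v).

Definition path_connected_space (R : realType) (M : topologicalType) : Prop :=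
  forall x y : M, exists g : R -> M,
    {within `[0, 1], continuous g} /\ g 0 = x /\ g 1 = y.

Definition complete_flow (R : realType) (M : topologicalType) (psi : R -> M -> M) : Prop :=
  (forall x, psi 0 x = x) /\
  (forall s t x, psi (s + t) x = psi s (psi t x)) /\
  continuous (fun q : R * M => psi q.1 q.2).

Definition flow_differentiable (R : realType) (M : topologicalType) (n : nat)
  (A : set (chart R M n)) (psi : R -> M -> M) : Prop :=
  (forall c, A c -> forall (x : M) (t0 : R), ch_dom c (psi t0 x) ->
     derivable (fun t : R => ch_map c (psi t x)) t0 1) /\
  (forall c1 c2 (t : R), A c1 -> A c2 -> forall v,
     (ch_map c1 @` (ch_dom c1 `&` (psi t @^-1` ch_dom c2))) v ->
     differentiable (ch_map c2 \o psi t \o ch_inv c1) v).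

(* Sigma is a codimension-one (embedded) submanifold transverse to the flow:
   around each point of Sigma there is a chart of the atlas in which Sigma is
   the coordinate hyperplane {y_i = 0}, and the flow's velocity has nonzero
   i-th component (i.e. it is not tangent to Sigma). *)
Definition poincare_section (R : realType) (M : topologicalType) (n : nat)
  (A : set (chart R M n)) (psi : R -> M -> M) (Sigma : set M) : Prop :=
  forall s, Sigma s -> exists c, A c /\ ch_dom c s /\
    exists i : 'I_n,
      (forall y, ch_dom c y -> (Sigma y <-> ch_map c y ord0 i = 0)) /\
      derivable (fun t : R => ch_map c (psi t s) ord0 i) 0 1 /\
      derive1 (fun t : R => ch_map c (psi t s) ord0 i) 0 != 0.

(* Global section: every orbit meets Sigma both forward and backward in time
   (intersections are transversal since Sigma is transverse everywhere). *)
Definition global_section (R : realType) (M : topologicalType)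
  (psi : R -> M -> M) (Sigma : set M) : Prop :=
  forall x : M, (exists t, 0 < t /\ Sigma (psi t x)) /\
                (exists t, t < 0 /\ Sigma (psi t x)).

Definition rel_closed (M : topologicalType) (Sigma : set M) : Prop :=
  forall u : nat -> M, (forall k, Sigma (u k)) ->
    forall x : M, u @ \oo --> x -> exists y, Sigma y /\ u @ \oo --> y.

Definition first_return_time (R : realType) (M : topologicalType)
  (psi : R -> M -> M) (Sigma : set M) (T : M -> R) : Prop :=
  forall s, Sigma s ->
    0 < T s /\ Sigma (psi (T s) s) /\
    (forall t, 0 < t < T s -> ~ Sigma (psi t s)).

From HB Require Import structures.
From mathcomp Require Import all_boot all_order all_algebra.
From mathcomp Require Import all_classical all_reals all_analysis.
Import Order.TTheory GRing.Theory Num.Theory.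
Import numFieldNormedType.Exports.
Local Open Scope classical_set_scope.
Local Open Scope ring_scope.

(* Iterating Delta keeps a point of the fibre p^-1(x) in the fibre and lowers
   its time coordinate by successive return times, so the iterates of a point
   (s, t) sweep, in decreasing time, exactly the crossings of the orbit of x
   with Sigma before time t.  Two such crossings at times t' <= t are thus
   linked by some Delta^k, unless the decreasing times of the iterates stay
   above t'.  They would then converge, and the corresponding crossings would
   accumulate at a point of Sigma (Sigma is relatively closed); transversality
   excludes this, since the normal coordinate of the orbit would vanish on a
   sequence tending to the limit time and so have zero derivative there. *)

Lemma derive1_eq0_of_cvg_zeros {R : realType} {g : R -> R} {x : R}
    (u : nat -> R) :
  derivable g x 1 -> u @ \oo --> x -> (forall k, u k != x) ->
  (\forall k \near \oo, g (u k) = g x) -> derive1 g x = 0.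
Proof.
move=> dg ux uNx gu.
set q := fun h : R => h^-1 *: ((g \o shift x) (h *: 1) - g x).
have ux0 : (fun k => u k - x) @ \oo --> 0.
  by rewrite -(subrr x); apply: cvgB => //; exact: cvg_cst.
have uxN : forall k, u k - x != 0 by move=> k; rewrite subr_eq0.
have q_lim := (cvgr_dnbhsP q 0 _).1 dg _ (conj uxN ux0).
have q_0 : q (u k - x) @[k --> \oo] --> (0 : R).
  apply: cvg_near_cst; apply: filterS gu => k guk.
  by rewrite /q /= /shift /GRing.scale /= mulr1 subrK guk subrr mulr0.
by rewrite (derive1E g x) /derive; exact: cvg_unique q_lim q_0.
Qed.

Lemma rel_closed_cvg {M : topologicalType} {Sigma : set M} {u : nat -> M}
    {x : M} :
  hausdorff_space M -> rel_closed Sigma ->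
  (forall k, Sigma (u k)) -> u @ \oo --> x -> Sigma x.
Proof.
move=> hausM closedS Su ux.
have [y [Sy uy]] := closedS _ Su _ ux.
by rewrite (cvg_unique hausM ux uy).
Qed.

Section Flow.
Set Implicit Arguments.
Variables (R : realType) (M : topologicalType) (psi : R -> M -> M).
Hypothesis flowM : complete_flow psi.

Lemma flowD s t x : psi s (psi t x) = psi (s + t) x.
Proof. by case: flowM => _ [-> _]. Qed.

Lemma flowNK t x : psi (- t) (psi t x) = x.
Proof. by rewrite flowD addNr; case: flowM => ->. Qed.

Lemma flow_cvg (tau : nat -> R) (L : R) x :
  tau @ \oo --> L -> (fun k => psi (tau k) x) @ \oo --> psi L x.
Proof.
move=> tauL; have psi_cont := flowM.2.2 (L, x).
exact: (@continuous2_cvg _ _ _ _ _ _ tau (fun=> x) psi L x psi_cont tauL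
  (cvg_cst _)).
Qed.

End Flow.

Section PoincareSection.
Set Implicit Arguments.
Variables (R : realType) (M : topologicalType) (n : nat)
  (A : set (chart R M n)) (psi : R -> M -> M) (Sigma : set M) (T : M -> R).
Hypotheses (hausM : hausdorff_space M) (flowM : complete_flow psi)
  (sectionS : poincare_section A psi Sigma) (closedS : rel_closed Sigma)
  (returnT : first_return_time psi Sigma T).

Lemma section_crossings_isolated x (tau : nat -> R) (L : R) :
  tau @ \oo --> L -> (forall k, tau k != L) ->
  (forall k, Sigma (psi (tau k) x)) -> False.
Proof.
move=> tauL tauN Stau.
have cross_cvg := flow_cvg flowM x tauL.
set z := psi L x.
have Sz : Sigma z := rel_closed_cvg hausM closedS Stau cross_cvg.
have [c [Ac [cz [i [Sc [dg g'N0]]]]]] := sectionS Sz.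
have in_chart : \forall k \near \oo, ch_dom c (psi (tau k) x).
  by apply: cross_cvg; apply: open_nbhs_nbhs; split => //; exact: ch_open.
have Sz0 : ch_map c (psi 0 z) ord0 i = 0.
  by case: flowM => -> _; apply/(Sc z cz).
move/eqP: g'N0; apply; apply: (derive1_eq0_of_cvg_zeros (fun k => tau k - L) dg).
- by rewrite -(subrr L); apply: cvgB => //; exact: cvg_cst.
- by move=> k; rewrite subr_eq0.
- apply: filterS in_chart => k ck.
  by rewrite Sz0 /z (flowD flowM) subrK; apply/(Sc _ ck).
Qed.

Definition return_shift (q : M * R) := (psi (T q.1) q.1, q.2 - T q.1).

Lemma return_shift_iter_fibre q k : Sigma q.1 ->
  Sigma (iter k return_shift q).1 /\
  psi (iter k return_shift q).2 (iter k return_shift q).1 = psi q.2 q.1.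
Proof.
move=> Sq; elim: k => [|k [Sk flow_k]] //=.
have [_ [S_return _]] := returnT Sk.
by rewrite (flowD flowM) subrK.
Qed.

Lemma fibre_eq_of_time_eq q q' : psi q.2 q.1 = psi q'.2 q'.1 ->
  q.2 = q'.2 -> q = q'.
Proof.
case: q q' => s t [s' t'] /= E tt'; rewrite -tt'; congr pair.
by rewrite -(flowNK flowM t s) E tt' (flowNK flowM).
Qed.

Lemma return_shift_iter_time_unbounded q t : Sigma q.1 ->
  exists k, (iter k return_shift q).2 < t.
Proof.
move=> Sq; apply: contrapT => /forallNP time_ge.
set b := fun k => (iter k return_shift q).2.
have b_ge : forall k, t <= b k by move=> k; rewrite leNgt; apply/negP/time_ge.
have b_lt : forall k, b k.+1 < b k.
  move=> k; rewrite /b /= ltrBlDr ltrDl.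
  by have [] := returnT (return_shift_iter_fibre q k Sq).1.
have b_dec : nonincreasing_seq b.
  by apply/nonincreasing_seqP => k; exact/ltW.
have b_cvg : cvgn b.
  by apply: nonincreasing_is_cvgn b_dec _; exists t => _ [k _ <-].
have lim_le := nonincreasing_cvgn_ge b_dec b_cvg.
apply: (@section_crossings_isolated (psi q.2 q.1) (fun k => - b k) (- limn b)).
- exact: cvgN.
- move=> k; rewrite eqr_opp; apply/eqP => bk.
  by have := b_lt k; rewrite bk ltNge lim_le.
- move=> k; have [Sk flow_k] := return_shift_iter_fibre q k Sq.
  by rewrite -flow_k (flowNK flowM).
Qed.

Lemma return_shift_iter_between q q' k :
  Sigma q.1 -> Sigma q'.1 -> psi q.2 q.1 = psi q'.2 q'.1 ->
  (iter k.+1 return_shift q).2 < q'.2 <= (iter k return_shift q).2 ->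
  iter k return_shift q = q'.
Proof.
move=> Sq Sq' same_point /andP[lt_next le_k].
set qk := iter k return_shift q in lt_next le_k *.
have [Sk flow_k] := return_shift_iter_fibre q k Sq.
have [eq_k|ne_k] := eqVneq qk.2 q'.2.
  by apply: fibre_eq_of_time_eq; rewrite // flow_k.
have [_ [_ no_return]] := returnT Sk.
case: (no_return (qk.2 - q'.2)).
  by rewrite subr_gt0 lt_def ne_k le_k /= ltrBlDr -ltrBlDl.
by rewrite addrC -(flowD flowM) flow_k same_point (flowNK flowM).
Qed.

Lemma return_shift_iter_reaches q q' :
  Sigma q.1 -> Sigma q'.1 -> psi q.2 q.1 = psi q'.2 q'.1 -> q'.2 <= q.2 ->
  exists k, iter k return_shift q = q'.
Proof.
move=> Sq Sq' same_point le_q.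
have [m lt_m min_m] := ex_minnP (return_shift_iter_time_unbounded q q'.2 Sq).
have m_gt0 : (0 < m)%N by case: m lt_m {min_m} => //=; rewrite ltNge le_q.
exists m.-1; apply: return_shift_iter_between => //.
rewrite prednK // lt_m /= leNgt.
by apply/negP => /min_m; rewrite leqNgt ltn_predL m_gt0.
Qed.

End PoincareSection.

Theorem lemma2p2 (R : realType) (M : topologicalType) (n : nat)
  (A : set (chart R M n)) (psi : R -> M -> M) (Sigma : set M) (T : M -> R) :
  hausdorff_space M ->
  diff_atlas A ->
  path_connected_space R M ->
  complete_flow psi ->
  flow_differentiable A psi ->
  poincare_section A psi Sigma ->
  global_section psi Sigma ->
  rel_closed Sigma ->
  first_return_time psi Sigma T ->
  let r := fun s : M => psi (T s) s in
  let p := fun q : M * R => psi q.2 q.1 in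
  let Delta := fun q : M * R => (r q.1, q.2 - T q.1) in
  forall (x : M) (s0 : M) (t0 : R), Sigma s0 -> p (s0, t0) = x ->
    [set q : M * R | Sigma q.1 /\ p q = x] =
      [set q | exists k : nat, q = iter k Delta (s0, t0)] `|`
      [set q | Sigma q.1 /\ exists k : nat, iter k Delta q = (s0, t0)].
Proof.
move=> hausM _ _ flowM _ sectionS _ closedS returnT r p Delta x s0 t0 Ss0 <-.
have reaches := return_shift_iter_reaches hausM flowM sectionS closedS returnT.
have fibre := return_shift_iter_fibre flowM returnT.
apply/seteqP; split => [[s t] /= [Ss same_point]|q].
  have [le_t|lt_t] := leP t t0.
    have [k iter_k] := reaches (s0, t0) (s, t) Ss0 Ss (esym same_point) le_t.
    by left; exists k.
  by right; split=> //; apply: reaches (s, t) (s0, t0) Ss Ss0 same_point (ltW lt_t).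
case=> [[k ->]|[Sq [k iter_q]]]; first exact: fibre.
by split=> //; rewrite /p -(fibre q k Sq).2 iter_q.
Qed.
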